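(* Let $0<r_1<r_2<r_3$ satisfy \[ r_2(r_3-r_1)^3 - r_1(r_3+r_2)^3 - r_3(r_1+r_2)^3 \ \ge\ 0 . \] Then for every $\theta\in[0,\pi]$ we have $g_{13}(\theta)\le g_{12}(\theta)$ and $g_{13}(\theta)\le g_{23}(\theta)$.
   Context: For $i,j\in\{1,2,3\}$ and $\theta\in\mathbb R$ set $D_{ij}(\theta)=r_i^2+r_j^2-2r_ir_j\cos\theta$ and $g_{ij}(\theta)=\dfrac{r_ir_j\sin\theta}{D_{ij}(\theta)^{3/2}}$. *)

From Stdlib Require Import Reals.
Open Scope R_scope.

Definition Dij (ri rj theta : R) : R := ri^2 + rj^2 - 2*ri*rj*cos theta.

(* g_ij(theta) = ri rj sin theta / D_ij(theta)^(3/2);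
   D^(3/2) is written (sqrt D)^3, which equals D^(3/2) for D >= 0
   (D_ij >= (ri - rj)^2 >= 0 always). *)
Definition gij (ri rj theta : R) : R :=
  ri * rj * sin theta / (sqrt (Dij ri rj theta))^3.

From Stdlib Require Import Reals Lra Psatz.
Open Scope R_scope.

(* For 0 <= theta <= PI we have sin theta >= 0 and -1 <= cos theta <= 1,
   so the distance term is squeezed between two squares:
       (rj - ri)^2 <= D_ij(theta) <= (ri + rj)^2.
   Consequently, for 0 < ri < rj,
       ri rj sin theta / (ri + rj)^3  <=  g_ij(theta)  <=  ri rj sin theta / (rj - ri)^3.
   Hence g_ij <= g_kl on [0, PI] as soon as the constant of the upper bound for the
   pair (i,j) is below the constant of the lower bound for the pair (k,l), i.e.
       ri rj (rk + rl)^3 <= rk rl (rj - ri)^3          (lemma gij_le_of_constants).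
   The hypothesis of the theorem says r2 (r3-r1)^3 dominates both r1 (r3+r2)^3 and
   r3 (r1+r2)^3; multiplying by r1, resp. r3, gives this constant comparison for
   the pairs (13 vs 12) and (13 vs 23), which proves the theorem. *)

Lemma div_cube_antitone (x y K : R) :
  0 < x <= y -> 0 <= K -> K / y^3 <= K / x^3.
Proof.
  intros [Hx Hxy] HK. unfold Rdiv. apply Rmult_le_compat_l; [exact HK |].
  apply Rinv_le_contravar; [apply pow_lt; lra | apply pow_incr; lra].
Qed.

Lemma div_le_div_cross (x y A B : R) :
  0 < A -> 0 < B -> x * B <= y * A -> x / A <= y / B.
Proof.
  intros HA HB H. apply (Rmult_le_reg_r (A * B)); [nra |].
  replace (x / A * (A * B)) with (x * B) by (field; lra).
  replace (y / B * (A * B)) with (y * A) by (field; lra).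
  exact H.
Qed.

Lemma Dij_ge_sq_diff (ri rj theta : R) :
  0 <= ri * rj -> (rj - ri)^2 <= Dij ri rj theta.
Proof.
  intros Hp. pose proof (COS_bound theta) as [_ Hc].
  assert (0 <= ri * rj * (1 - cos theta)) by (apply Rmult_le_pos; lra).
  unfold Dij. nra.
Qed.

Lemma Dij_le_sq_sum (ri rj theta : R) :
  0 <= ri * rj -> Dij ri rj theta <= (ri + rj)^2.
Proof.
  intros Hp. pose proof (COS_bound theta) as [Hc _].
  assert (0 <= ri * rj * (1 + cos theta)) by (apply Rmult_le_pos; lra).
  unfold Dij. nra.
Qed.

Lemma gij_upper (ri rj theta : R) :
  0 < ri -> ri < rj -> 0 <= sin theta ->
  gij ri rj theta <= ri * rj * sin theta / (rj - ri)^3.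
Proof.
  intros Hi Hij Hs. unfold gij.
  apply div_cube_antitone; [split | apply Rmult_le_pos; nra].
  - lra.
  - rewrite <- (sqrt_pow2 (rj - ri)) by lra.
    apply sqrt_le_1_alt, Dij_ge_sq_diff. nra.
Qed.

Lemma gij_lower (ri rj theta : R) :
  0 < ri -> ri < rj -> 0 <= sin theta ->
  ri * rj * sin theta / (ri + rj)^3 <= gij ri rj theta.
Proof.
  intros Hi Hij Hs. unfold gij.
  assert (Hpos : 0 < Dij ri rj theta).
  { eapply Rlt_le_trans; [| apply Dij_ge_sq_diff; nra]. nra. }
  apply div_cube_antitone; [split | apply Rmult_le_pos; nra].
  - apply sqrt_lt_R0, Hpos.
  - rewrite <- (sqrt_pow2 (ri + rj)) by lra.
    apply sqrt_le_1_alt, Dij_le_sq_sum. nra.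
Qed.

Lemma gij_le_of_constants (ri rj rk rl theta : R) :
  0 < ri -> ri < rj -> 0 < rk -> rk < rl ->
  ri * rj * (rk + rl)^3 <= rk * rl * (rj - ri)^3 ->
  0 <= theta <= PI ->
  gij ri rj theta <= gij rk rl theta.
Proof.
  intros Hi Hij Hk Hkl Hconst Htheta.
  assert (Hs : 0 <= sin theta) by (apply sin_ge_0; lra).
  eapply Rle_trans; [apply gij_upper; assumption |].
  eapply Rle_trans; [| apply gij_lower; assumption].
  apply div_le_div_cross; [apply pow_lt; lra | apply pow_lt; lra |].
  replace (ri * rj * sin theta * (rk + rl)^3)
    with ((ri * rj * (rk + rl)^3) * sin theta) by ring.
  replace (rk * rl * sin theta * (rj - ri)^3)
    with ((rk * rl * (rj - ri)^3) * sin theta) by ring.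
  apply Rmult_le_compat_r; assumption.
Qed.

Theorem lemma2p3 (r1 r2 r3 : R) :
  0 < r1 -> r1 < r2 -> r2 < r3 ->
  r2 * (r3 - r1)^3 - r1 * (r3 + r2)^3 - r3 * (r1 + r2)^3 >= 0 ->
  forall theta : R, 0 <= theta <= PI ->
    gij r1 r3 theta <= gij r1 r2 theta /\ gij r1 r3 theta <= gij r2 r3 theta.
Proof.
  intros H1 H12 H23 Hcond theta Htheta.
  assert (Hsum1 : 0 <= r1 * (r3 + r2)^3) by (apply Rmult_le_pos; [lra | apply pow_le; lra]).
  assert (Hsum3 : 0 <= r3 * (r1 + r2)^3) by (apply Rmult_le_pos; [lra | apply pow_le; lra]).
  split; apply gij_le_of_constants; try lra.
  - (* multiply r3 (r1+r2)^3 <= r2 (r3-r1)^3 by r1 *)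
    replace (r1 * r3 * (r1 + r2)^3) with (r1 * (r3 * (r1 + r2)^3)) by ring.
    replace (r1 * r2 * (r3 - r1)^3) with (r1 * (r2 * (r3 - r1)^3)) by ring.
    apply Rmult_le_compat_l; lra.
  - (* multiply r1 (r3+r2)^3 <= r2 (r3-r1)^3 by r3 *)
    replace (r1 * r3 * (r2 + r3)^3) with (r3 * (r1 * (r3 + r2)^3)) by ring.
    replace (r2 * r3 * (r3 - r1)^3) with (r3 * (r2 * (r3 - r1)^3)) by ring.
    apply Rmult_le_compat_l; lra.
Qed.
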